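(* Assume (A1)–(A3) and $m_1<0$. Then for every $k\in\mathbb N$, the random variable $\sup_{0\le s\le T_1(k)}|Y_1(s)|$ is $\mathbb P_{(k,0)}$-integrable, where $T_1(k)=\inf\{n>0: X_1(n)=k\}$.
   Context: Let $\mathbb N=\{0,1,2,\dots\}$ and fix an integer $k_0\ge1$. Let $\mu$, $\mu'_j$ ($0\le j<k_0$), $\mu''_i$ ($0\le i<k_0$), $\mu_{ij}$ ($0\le i,j<k_0$) be probability measures on $\mathbb Z^2$. The random walk $Z=(X(n),Y(n))$ on $\mathbb N^2$ has transition probabilities $p((i,j)\to(i',j'))$ equal to $\mu(i'-i,j'-j)$ if $i,j\ge k_0$; $\mu'_j(i'-i,j'-j)$ if $i\ge k_0$, $0\le j<k_0$; $\mu''_i(i'-i,j'-j)$ if $0\le i<k_0$, $j\ge k_0$; $\mu_{ij}(i'-i,j'-j)$ if $0\le i,j<k_0$. Assumptions: (A1) $\mu(a,b)=0$ if $a<-k_0$ or $b<-k_0$; $\mu'_j(a,b)=0$ if $a<-k_0$ or $b<-j$; $\mu''_i(a,b)=0$ if $b<-k_0$ or $a<-i$; $\mu_{ij}(a,b)=0$ if $a<-i$ or $b<-j$. (A2) There are $\delta,\gamma,C>0$ with $\sup_{(i,j)\in\mathbb N^2}\mathbb E_{(i,j)}[\exp(\delta(X(1)-i)+\gamma(Y(1)-j))]\le C$. (A3) $Z_0,Z_1,Z_2,Z$ are irreducible on their state spaces. $Z_0$: random walk on $\mathbb Z^2$ with increment law $\mu$; $m_1=\sum a\mu(a,b)$.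 $Z_1=(X_1,Y_1)$: Markov chain on $\mathbb N\times\mathbb Z$ with transitions $\mu(i'-i,j'-j)$ from $(i,j)$ if $i\ge k_0$ and $\mu''_i(i'-i,j'-j)$ if $0\le i<k_0$; $\mathbb P_{(k,0)}$ is its law from $(k,0)$. $Z_2$: Markov chain on $\mathbb Z\times\mathbb N$ with transitions $\mu$ if $j\ge k_0$ and $\mu'_j$ if $0\le j<k_0$. *)

From HB Require Import structures.
From mathcomp Require Import all_boot all_order all_algebra.
From mathcomp Require Import all_classical all_reals all_analysis.
Set Implicit Arguments. Unset Strict Implicit. Unset Printing Implicit Defensive.
Import Order.TTheory GRing.Theory Num.Theory.
Local Open Scope classical_set_scope.
Local Open Scope ring_scope.

Section Defs.
Variable R : realType.

Definition probZ2 (mu : int * int -> R) : Prop :=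
  (forall d, 0 <= mu d) /\ \esum_(d in [set: int * int]) (mu d)%:E = 1%E.

Fixpoint pathprob (T : Type) (p : T -> T -> R) (x : T) (s : seq T) : R :=
  match s with
  | [::] => 1
  | y :: s' => p x y * pathprob p y s'
  end.

Definition irreducible (T : Type) (p : T -> T -> R) : Prop :=
  forall x y : T, exists s : seq T, last x s = y /\ 0 < pathprob p x s.

Definition diff (a a' b b' : int) : int * int := (a' - a, b' - b).

Definition pZ (k0 : nat) (mu : int * int -> R) (mu1 mu2 : nat -> int * int -> R)
  (mu12 : nat -> nat -> int * int -> R) (z z' : nat * nat) : R :=
  let d := diff z.1%:Z z'.1%:Z z.2%:Z z'.2%:Z in
  if (k0 <= z.1)%N && (k0 <= z.2)%N then mu d
  else if (k0 <= z.1)%N then mu1 z.2 d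
  else if (k0 <= z.2)%N then mu2 z.1 d
  else mu12 z.1 z.2 d.

Definition pZ0 (mu : int * int -> R) (z z' : int * int) : R :=
  mu (diff z.1 z'.1 z.2 z'.2).

Definition pZ1 (k0 : nat) (mu : int * int -> R) (mu2 : nat -> int * int -> R)
  (z z' : nat * int) : R :=
  let d := diff z.1%:Z z'.1%:Z z.2 z'.2 in
  if (k0 <= z.1)%N then mu d else mu2 z.1 d.

Definition pZ2 (k0 : nat) (mu : int * int -> R) (mu1 : nat -> int * int -> R)
  (z z' : int * nat) : R :=
  let d := diff z.1 z'.1 z.2%:Z z'.2%:Z in
  if (k0 <= z.2)%N then mu d else mu1 z.2 d.

(* m_1 = sum_{(a,b)} a mu(a,b), as an extended real (positive part minus
   negative part). *)
Definition m1 (mu : int * int -> R) : \bar R :=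
  (\esum_(d in [set: int * int]) (Num.max (d.1%:~R : R) 0 * mu d)%:E -
   \esum_(d in [set: int * int]) (Num.max (- (d.1%:~R : R)) 0 * mu d)%:E)%E.

(* Given the states s = [:: z1; ...; zn] following z0 (with |Y(0)| = acc),
   returns max_{0 <= t <= min(T, n)} |Y(t)| where T = inf{t > 0 : X(t) = k}. *)
Fixpoint stopmax (k : nat) (acc : nat) (s : seq (nat * int)) : nat :=
  match s with
  | [::] => acc
  | z :: s' =>
      let acc' := maxn acc `|z.2|%N in
      if z.1 == k then acc' else stopmax k acc' s'
  end.

(* E_{(k,0)}[ max_{0 <= s <= min(T_1(k), n)} |Y_1(s)| ] for the chain Z_1
   with transition probabilities p. *)
Definition Etrunc (p : nat * int -> nat * int -> R) (k n : nat) : \bar R :=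
  \esum_(s in [set s : seq (nat * int) | size s = n])
     (pathprob p (k, 0%:Z) s * ((stopmax k 0 s)%:R : R))%:E.

End Defs.

From Pilot Require Import Defs.
From HB Require Import structures.
From mathcomp Require Import all_boot all_order all_algebra.
From mathcomp Require Import all_classical all_reals all_analysis.
From mathcomp Require Import zify ring lra.
Set Implicit Arguments. Unset Strict Implicit. Unset Printing Implicit Defensive.
Import Order.TTheory GRing.Theory Num.Theory.
Local Open Scope classical_set_scope.
Local Open Scope ring_scope.

(* Let T be the hitting time of level k by X_1 and Q the transition operator
   of Z_1 killed at T.  Since |Y_1| grows by at most |Y_1(s+1) - Y_1(s)| at each
   step, E_{(k,0)}[max_{s <= T /\ n} |Y_1(s)|] <= u_n(k,0), where u_0 = 0 and
   u_{n+1} = c + Q u_n, and c bounds the mean vertical jump uniformly in the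
   state, by (A1) and (A2).  The affine function V(x,y) = (c/eps) x + K with
   eps = -m_1 dominates every u_n.  On the columns x >= k0 the mean horizontal
   jump is m_1, so c + Q V <= V.  On the finitely many columns x < k0,
   irreducibility and the invariance of Z_1 under vertical translations give a
   path to level k whose length m and probability q > 0 do not depend on y;
   over m steps the recursion accrues at most c m + (c/eps) m B, B bounding
   the mean horizontal jump, while losing at least the mass q, and a large K
   absorbs the difference. *)

Section EsumFacts.
Variable R : realType.
Local Open Scope ereal_scope.

Lemma esumZl_le (T : choiceType) (I : set T) (r : R) (a : T -> \bar R) :
  (0 <= r)%R -> (forall i, I i -> 0 <= a i) ->
  \esum_(i in I) (r%:E * a i) <= r%:E * \esum_(i in I) a i.
Proof.
move=> r0 a0; apply: ge_ereal_sup => _ [X [finX XI]] <- /=.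
rewrite fsbig_finite //= big_seq_cond -ge0_sume_distrr; last first.
  by move=> i /andP[+ _]; rewrite in_fset_set // inE => /XI /a0.
rewrite -big_seq_cond -fsbig_finite //; apply: lee_wpmul2l; first by rewrite lee_fin.
by apply: ereal_sup_ubound; exists X.
Qed.

Lemma esum_setT_split (T : choiceType) (F : T -> \bar R) (y : T) :
  (forall i, 0 <= F i) ->
  \esum_(i in [set: T]) F i = F y + \esum_(i in ~` [set y]) F i.
Proof.
move=> F0; rewrite (esumID [set y]); last by move=> i _; apply: F0.
by rewrite setTI esum_set1 // setTI.
Qed.

Lemma esum_le_combination (T : choiceType) (f m h : T -> R) (al be Mm Mh : R) :
  (0 <= al)%R -> (0 <= be)%R -> (forall d, 0 <= m d)%R -> (forall d, 0 <= h d)%R ->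
  (forall d, f d <= al * m d + be * h d)%R ->
  \esum_(d in [set: T]) (m d)%:E <= Mm%:E ->
  \esum_(d in [set: T]) (h d)%:E <= Mh%:E ->
  \esum_(d in [set: T]) (f d)%:E <= (al * Mm + be * Mh)%:E.
Proof.
move=> al0 be0 m0 h0 hf hm hh.
apply: (@le_trans _ _ (\esum_(d in [set: T]) (al%:E * (m d)%:E + be%:E * (h d)%:E))).
  by apply: le_esum => d _; rewrite -!EFinM -EFinD lee_fin.
rewrite esumD; last 2 first.
- by move=> d _; rewrite -EFinM lee_fin mulr_ge0.
- by move=> d _; rewrite -EFinM lee_fin mulr_ge0.
rewrite EFinD !EFinM; apply: leeD.
  apply: le_trans (esumZl_le al0 _) _; first by move=> d _; rewrite lee_fin.
  by apply: lee_wpmul2l; rewrite ?lee_fin.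
apply: le_trans (esumZl_le be0 _) _; first by move=> d _; rewrite lee_fin.
by apply: lee_wpmul2l; rewrite ?lee_fin.
Qed.

Lemma esum_size0 (T : choiceType) (f : seq T -> \bar R) : 0 <= f [::] ->
  \esum_(s in [set s : seq T | size s = 0%N]) f s = f [::].
Proof.
move=> f0; rewrite (_ : [set s | size s = 0%N] = [set [::]]) ?esum_set1 //.
by apply/seteqP; split => -[].
Qed.

Lemma esum_size_succ (T : choiceType) (f : seq T -> \bar R) n :
  (forall s, 0 <= f s) ->
  \esum_(s in [set s : seq T | size s = n.+1]) f s =
  \esum_(x in [set: T]) \esum_(s in [set s : seq T | size s = n]) f (x :: s).
Proof.
move=> f0; rewrite esum_esum; last by move=> *; apply: f0.
apply: reindex_esum; split.
- by move=> [x s] [_ /= ->].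
- by move=> [x s] [y t] _ _ /= [-> ->].
- by move=> [|x s] //= [hs]; exists (x, s).
Qed.

Lemma ge0_le_fineK (x : \bar R) (r : R) :
  0 <= x -> x <= r%:E -> (fine x)%:E = x.
Proof. by move=> x0 xr; rewrite fineK // ge0_fin_numE // (le_lt_trans xr) ?ltry. Qed.

End EsumFacts.

Section PathProb.
Variables (R : realType) (T : choiceType) (p : T -> T -> R).

Lemma pathprob_cat x s1 s2 :
  pathprob p x (s1 ++ s2) = pathprob p x s1 * pathprob p (last x s1) s2.
Proof. by elim: s1 x => [|y s IH] x /=; rewrite ?mul1r // IH mulrA. Qed.

Hypothesis p_ge0 : forall x y, 0 <= p x y.

Lemma pathprob_ge0 x s : 0 <= pathprob p x s.
Proof. by elim: s x => [|y s IH] x //=; rewrite mulr_ge0. Qed.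

Hypothesis p_mass : forall x, (\esum_(y in [set: T]) (p x y)%:E <= 1)%E.

Lemma p_le1 x y : p x y <= 1.
Proof.
rewrite -lee_fin; apply: le_trans (p_mass x).
rewrite (esum_setT_split y) ?leeDl //; last by move=> z; rewrite lee_fin.
by apply: esum_ge0 => z _; rewrite lee_fin.
Qed.

Lemma pathprob_le1 x s : pathprob p x s <= 1.
Proof.
elim: s x => [|y s IH] x //=.
by apply: mulr_ile1 => //; [exact: pathprob_ge0 | exact: p_le1].
Qed.

Lemma esum_pathprob_le1 n x :
  (\esum_(s in [set s : seq T | size s = n]) (pathprob p x s)%:E <= 1)%E.
Proof.
elim: n x => [|n IH] x; first by rewrite esum_size0 // lee_fin.
rewrite esum_size_succ; last by move=> s; rewrite lee_fin pathprob_ge0.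
apply: le_trans (p_mass x); apply: le_esum => y _ /=.
under eq_esum do rewrite EFinM.
apply: le_trans (esumZl_le (p_ge0 x y) _) _.
  by move=> s _; rewrite lee_fin pathprob_ge0.
by rewrite -[leRHS]mule1 lee_wpmul2l ?lee_fin ?IH.
Qed.

End PathProb.

Lemma uniform_bound_ltn (R : realDomainType) (P : nat -> R -> Prop) N :
  (forall x K K', K <= K' -> P x K -> P x K') ->
  (forall x, (x < N)%N -> exists K, P x K) ->
  exists2 K, 0 <= K & forall x, (x < N)%N -> P x K.
Proof.
move=> mono; elim: N => [|N IH] ex; first by exists 0.
have [K1 K10 HK1] : exists2 K, 0 <= K & forall x, (x < N)%N -> P x K.
  by apply: IH => x hx; apply: ex; apply: ltnW.
have [K2 HK2] := ex N (ltnSn N).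
exists (Num.max K1 K2); first by rewrite le_max K10.
move=> x; rewrite ltnS leq_eqVlt => /orP[/eqP ->|hx].
  by apply: mono HK2; rewrite le_max lexx orbT.
by apply: mono (HK1 x hx); rewrite le_max lexx.
Qed.

Section Translation.
Variable R : realType.
Local Open Scope ereal_scope.

Lemma esum_shift_nat_int (x : nat) (y : int) (g : int * int -> \bar R) :
  (forall d, 0 <= g d) -> (forall d, (d.1 < - x%:Z)%R -> g d = 0) ->
  \esum_(z in [set: nat * int]) g (Defs.diff x%:Z z.1%:Z y z.2) =
  \esum_(d in [set: int * int]) g d.
Proof.
move=> g0 gz; rewrite (esumID [set d | (- x%:Z <= d.1)%R]) //.
rewrite [X in _ = _ + X]esum1 ?adde0 ?setTI; last first.
  by move=> d /negP; rewrite -ltNge => /gz.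
symmetry; apply: reindex_esum; split.
- by move=> [a b] _ /=; rewrite /Defs.diff /=; lia.
- by move=> [a b] [a' b'] _ _; rewrite /Defs.diff /= => -[h1 h2]; congr (_, _); lia.
- move=> [a b] /= ha; exists (absz (a + x%:Z)%R, (b + y)%R) => //.
  by rewrite /Defs.diff /=; congr (_, _); lia.
Qed.

Lemma esum_shift_nat_nat (i j : nat) (g : int * int -> \bar R) :
  (forall d, 0 <= g d) ->
  (forall d, (d.1 < - i%:Z)%R \/ (d.2 < - j%:Z)%R -> g d = 0) ->
  \esum_(z in [set: nat * nat]) g (Defs.diff i%:Z z.1%:Z j%:Z z.2%:Z) =
  \esum_(d in [set: int * int]) g d.
Proof.
move=> g0 gz.
rewrite (esumID [set d | (- i%:Z <= d.1)%R /\ (- j%:Z <= d.2)%R]) //.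
rewrite [X in _ = _ + X]esum1 ?adde0 ?setTI; last first.
  move=> d /= h; apply: gz; rewrite !ltNge; apply/orP; rewrite -negb_and.
  by apply/negP => /andP.
symmetry; apply: reindex_esum; split.
- by move=> [a b] _ /=; rewrite /Defs.diff /=; split; lia.
- by move=> [a b] [a' b'] _ _; rewrite /Defs.diff /= => -[h1 h2]; congr (_, _); lia.
- move=> [a b] /= [ha hb]; exists (absz (a + i%:Z)%R, absz (b + j%:Z)%R) => //.
  by rewrite /Defs.diff /=; congr (_, _); lia.
Qed.

End Translation.

Lemma le_scaled_expR (R : realType) (s t K u v : R) :
  0 < s -> 0 < t -> 0 <= K -> - K <= u -> 0 <= v ->
  v <= expR (s * K) / t * expR (s * u + t * v).
Proof.
move=> s0 t0 K0 hu v0.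
have h1 : 1 <= expR (s * K + s * u).
  have Ku : 0 <= K + u by lra.
  have : 0 <= s * K + s * u by rewrite -mulrDr mulr_ge0 // ltW.
  by have := expR_ge1Dx (s * K + s * u); lra.
have h2 : t * v <= expR (t * v) by have := expR_ge1Dx (t * v); lra.
rewrite mulrAC -expRD addrA expRD ler_pdivlMr // mulrC.
apply: le_trans h2 _; rewrite -{1}[expR (t * v)]mul1r.
by rewrite ler_wpM2r ?expR_ge0.
Qed.

Section KilledChain.
Variable R : realType.
Variables (p : nat * int -> nat * int -> R) (k k0 : nat) (c B eps : R).
Hypothesis p_ge0 : forall z z', 0 <= p z z'.
Hypothesis p_mass : forall z, (\esum_(z' in [set: nat * int]) (p z z')%:E <= 1)%E.
Hypothesis c_ge0 : 0 <= c.
Hypothesis B_ge0 : 0 <= B.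
Hypothesis eps_gt0 : 0 < eps.
Hypothesis dY_mean_le : forall z,
  (\esum_(z' in [set: nat * int]) (p z z' * (`|z'.2 - z.2|%N)%:R)%:E <= c%:E)%E.
Hypothesis X_mean_le : forall z,
  (\esum_(z' in [set: nat * int]) (p z z' * z'.1%:R)%:E <= (z.1%:R + B)%:E)%E.
Hypothesis X_drift : forall z, (k0 <= z.1)%N ->
  (\esum_(z' in [set: nat * int]) (p z z' * z'.1%:R)%:E <= (z.1%:R - eps)%:E)%E.
Hypothesis reach_level : forall x, (x < k0)%N ->
  exists (m : nat) (q : R), [/\ (0 < m)%N, 0 < q & forall y : int,
    exists s, [/\ size s = m, (last (x, y) s).1 = k & q <= pathprob p (x, y) s]].

Local Open Scope ereal_scope.

Definition killQ (f : nat * int -> \bar R) z :=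
  \esum_(z' in [set: nat * int]) ((p z z')%:E * (if z'.1 == k then 0 else f z')).

Definition lyap (al K : R) (z : nat * int) : \bar R := (al * z.1%:R + K)%:E.

Lemma killQ_ge0 f : (forall z, 0 <= f z) -> forall z, 0 <= killQ f z.
Proof.
move=> f0 z; apply: esum_ge0 => z' _.
by apply: mule_ge0; [rewrite lee_fin | case: ifP].
Qed.

Lemma le_killQ f g : (forall z, f z <= g z) -> forall z, killQ f z <= killQ g z.
Proof.
move=> fg z; apply: le_esum => z' _.
by apply: lee_wpmul2l; [rewrite lee_fin | case: ifP].
Qed.

Lemma killQD f g : (forall z, 0 <= f z) -> (forall z, 0 <= g z) ->
  forall z, killQ (fun z => f z + g z) z = killQ f z + killQ g z.
Proof.
move=> f0 g0 z; rewrite /killQ -esumD; last 2 first.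
- by move=> z' _; apply: mule_ge0; [rewrite lee_fin | case: ifP].
- by move=> z' _; apply: mule_ge0; [rewrite lee_fin | case: ifP].
apply: eq_esum => z' _; case: ifP => _; first by rewrite !mule0 adde0.
by rewrite ge0_muleDr.
Qed.

Lemma killQZ_le f r : (0 <= r)%R -> (forall z, 0 <= f z) ->
  forall z, killQ (fun z => r%:E * f z) z <= r%:E * killQ f z.
Proof.
move=> r0 f0 z; apply: le_trans (esumZl_le r0 _); last first.
  by move=> z' _; apply: mule_ge0; [rewrite lee_fin | case: ifP].
by apply: le_esum => z' _; case: ifP => _; rewrite ?mule0 // muleCA.
Qed.

Lemma esum_pZl_le z a : (0 <= a)%R ->
  \esum_(z' in [set: nat * int]) (a%:E * (p z z')%:E) <= a%:E.
Proof.
move=> a0; apply: le_trans (esumZl_le a0 _) _; first by move=> z' _; rewrite lee_fin.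
by rewrite -[leRHS]mule1 lee_wpmul2l ?lee_fin.
Qed.

Lemma killQ_cst_le a z : (0 <= a)%R -> killQ (fun=> a%:E) z <= a%:E.
Proof.
move=> a0; apply: le_trans (esum_pZl_le z a0); apply: le_esum => z' _.
by case: ifP => _; [rewrite mule0 mule_ge0 ?lee_fin | rewrite muleC].
Qed.

Lemma killQ_lyap_le al K z : (0 <= al)%R -> (0 <= K)%R ->
  killQ (lyap al K) z <=
  al%:E * (\esum_(z' in [set: nat * int]) (p z z' * z'.1%:R)%:E) + K%:E.
Proof.
move=> al0 K0.
apply: (@le_trans _ _ (\esum_(z' in [set: nat * int])
   (al%:E * (p z z' * z'.1%:R)%:E + K%:E * (p z z')%:E))).
  apply: le_esum => z' _; case: ifP => _.
    by rewrite mule0 adde_ge0 // mule_ge0 // lee_fin ?mulr_ge0.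
  by rewrite -!EFinM -EFinD lee_fin /lyap; lra.
rewrite esumD; last 2 first.
- by move=> z' _; rewrite mule_ge0 // lee_fin ?mulr_ge0.
- by move=> z' _; rewrite mule_ge0 // lee_fin.
apply: leeD; last exact: esum_pZl_le.
by apply: esumZl_le => // z' _; rewrite lee_fin mulr_ge0.
Qed.

Lemma killQ_lyap_mean_le al K z : (0 <= al)%R -> (0 <= K)%R ->
  killQ (lyap al K) z <= lyap al (K + al * B) z.
Proof.
move=> al0 K0; apply: le_trans (killQ_lyap_le z al0 K0) _.
rewrite (_ : lyap _ _ _ = al%:E * (z.1%:R + B)%:E + K%:E); last first.
  by rewrite -EFinM -EFinD /lyap; congr _%:E; ring.
by rewrite leeD2r // lee_wpmul2l ?lee_fin ?X_mean_le.
Qed.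

Lemma killQ_lyap_drift al K z : (0 <= al)%R -> (0 <= K)%R -> (k0 <= z.1)%N ->
  killQ (lyap al K) z <= lyap al (K - al * eps) z.
Proof.
move=> al0 K0 hz; apply: le_trans (killQ_lyap_le z al0 K0) _.
rewrite (_ : lyap _ _ _ = al%:E * (z.1%:R - eps)%:E + K%:E); last first.
  by rewrite -EFinM -EFinD /lyap; congr _%:E; ring.
by rewrite leeD2r // lee_wpmul2l ?lee_fin ?X_drift.
Qed.

Lemma iter_killQ_ge0 m f : (forall z, 0 <= f z) -> forall z, 0 <= iter m killQ f z.
Proof. by move=> f0; elim: m => [|m IH] //= z; apply: killQ_ge0. Qed.

Lemma le_iter_killQ m f g : (forall z, f z <= g z) ->
  forall z, iter m killQ f z <= iter m killQ g z.
Proof. by move=> fg; elim: m => [|m IH] //= z; apply: le_killQ. Qed.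

Lemma iter_killQ1_le1 m z : iter m killQ (fun=> 1) z <= 1.
Proof.
elim: m z => [|m IH] z //=.
by apply: le_trans (killQ_cst_le z ler01); apply: le_killQ.
Qed.

Lemma iter_killQ1_ge0 m z : 0 <= iter m killQ (fun=> 1) z.
Proof. by apply: iter_killQ_ge0 => _; rewrite lee_fin. Qed.

Lemma iter_killQ_lyap_le m al K z : (0 <= al)%R -> (0 <= K)%R ->
  iter m killQ (lyap al K) z <=
  lyap al (al * (m%:R * B)) z + K%:E * iter m killQ (fun=> 1) z.
Proof.
move=> al0 K0; elim: m z => [|m IH] z /=.
  by rewrite mul0r mulr0 mule1 /lyap addr0 EFinD.
have alB0 : (0 <= al * (m%:R * B))%R by rewrite !mulr_ge0.
rewrite (le_trans (le_killQ IH z)) // killQD; first last.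
- by move=> z'; rewrite mule_ge0 ?lee_fin ?iter_killQ1_ge0.
- by move=> z'; rewrite lee_fin addr_ge0 ?mulr_ge0.
apply: leeD; last by apply: killQZ_le => // z'; apply: iter_killQ1_ge0.
apply: le_trans (killQ_lyap_mean_le z al0 alB0) _.
by rewrite /lyap lee_fin mulrSr; lra.
Qed.

Lemma iter_killQ1_path_le s z : (last z s).1 = k -> s != [::] ->
  iter (size s) killQ (fun=> 1) z <= (1 - pathprob p z s)%:E.
Proof.
elim: s z => [//|y s IH] z hl _ /=.
set F := fun z' =>
  (p z z')%:E * (if z'.1 == k then 0 else iter (size s) killQ (fun=> 1) z').
have F0 i : 0 <= F i.
  by apply: mule_ge0; [rewrite lee_fin | case: ifP => // _; apply: iter_killQ1_ge0].
have pge0 i : 0 <= (p z i)%:E by rewrite lee_fin.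
have hFy : F y <= (p z y * (1 - pathprob p y s))%:E.
  rewrite /F EFinM lee_wpmul2l //; case: eqP => hy.
    by rewrite lee_fin subr_ge0 pathprob_le1.
  have sn : s != [::] by move: hl; case: (s) => //= hl; rewrite hl in hy.
  exact: IH.
have hrest : \esum_(i in ~` [set y]) F i <= \esum_(i in ~` [set y]) (p z i)%:E.
  apply: le_esum => i _; rewrite /F -[leRHS]mule1 lee_wpmul2l //.
  by case: ifP => // _; apply: iter_killQ1_le1.
have hmass := p_mass z; rewrite (esum_setT_split y) // in hmass.
rewrite /killQ -/F (esum_setT_split y) //; apply: le_trans (leeD hFy hrest) _.
have := esum_ge0 (fun i _ => pge0 i) : 0 <= \esum_(i in ~` [set y]) (p z i)%:E.
move: hmass; case: (esum _ _) => [r||] //; rewrite -EFinD !lee_fin => hmass _.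
have := pathprob_ge0 p_ge0 y s; lra.
Qed.

(* For a stochastic [p], [cost n z] is [c] times the mean of [min(T, n)] under
   [P_z], where [T] is the first positive time at level [k]. *)
Fixpoint cost n : nat * int -> \bar R :=
  if n is n'.+1 then fun z => c%:E + killQ (cost n') z else fun=> 0.

Lemma cost_ge0 n z : 0 <= cost n z.
Proof. by elim: n z => [|n IH] z //=; rewrite adde_ge0 ?lee_fin ?killQ_ge0. Qed.

Lemma cost_le_linear n z : cost n z <= (c * n%:R)%:E.
Proof.
elim: n z => [|n IH] z /=; first by rewrite mulr0.
have cn0 : (0 <= c * n%:R)%R by rewrite mulr_ge0.
apply: le_trans (leeD2l _ (le_trans (le_killQ IH z) (killQ_cst_le z cn0))) _.
by rewrite -EFinD lee_fin mulrS; lra.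
Qed.

Lemma cost_addn_le n m z : cost (n + m) z <= (c * m%:R)%:E + iter m killQ (cost n) z.
Proof.
elim: m z => [|m IH] z; first by rewrite addn0 mulr0 add0e.
rewrite addnS /=.
have cm0 : (0 <= c * m%:R)%R by rewrite mulr_ge0.
rewrite (le_trans (leeD2l _ (le_killQ IH z))) // killQD; first last.
- by move=> ?; apply: iter_killQ_ge0 => ?; apply: cost_ge0.
- by move=> ?; rewrite lee_fin.
rewrite addeA leeD2r // (le_trans (leeD2l _ (killQ_cst_le z cm0))) //.
by rewrite -EFinD lee_fin mulrS; lra.
Qed.

Definition Estop z acc n := \esum_(s in [set s : seq (nat * int) | size s = n])
  (pathprob p z s * (stopmax k acc s)%:R)%:E.

Lemma Estop_succ_le z acc n : Estop z acc n.+1 <=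
  \esum_(z' in [set: nat * int]) ((p z z')%:E *
    (if z'.1 == k then ((maxn acc `|z'.2|)%:R)%:E
     else Estop z' (maxn acc `|z'.2|) n)).
Proof.
rewrite /Estop esum_size_succ; last by move=> s; rewrite lee_fin mulr_ge0 ?pathprob_ge0.
apply: le_esum => z' _ /=; case: ifP => _.
  under eq_esum do rewrite mulrAC EFinM.
  apply: le_trans (esumZl_le _ _) _.
  - by rewrite mulr_ge0.
  - by move=> s _; rewrite lee_fin pathprob_ge0.
  by rewrite -EFinM -[leRHS]mule1 lee_wpmul2l ?lee_fin ?mulr_ge0 ?esum_pathprob_le1.
under eq_esum do rewrite -mulrA EFinM.
by apply: esumZl_le => // s _; rewrite lee_fin mulr_ge0 ?pathprob_ge0.
Qed.

Lemma esum_maxn_le z acc f : (`|z.2| <= acc)%N -> (forall z, 0 <= f z) ->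
  \esum_(z' in [set: nat * int]) ((p z z')%:E *
     (((maxn acc `|z'.2|)%:R)%:E + (if z'.1 == k then 0 else f z')))
  <= (acc%:R)%:E + (c%:E + killQ f z).
Proof.
move=> hz f0; have g0 z' : 0 <= (if z'.1 == k then 0 else f z') by case: ifP.
apply: (@le_trans _ _ (\esum_(z' in [set: nat * int]) ((acc%:R)%:E * (p z z')%:E +
   ((p z z' * (`|z'.2 - z.2|%N)%:R)%:E +
    (p z z')%:E * (if z'.1 == k then 0 else f z'))))).
  apply: le_esum => z' _; rewrite ge0_muleDr ?lee_fin // addeA leeD2r //.
  rewrite -!EFinM -EFinD lee_fin.
  have : ((maxn acc `|z'.2|)%:R <= acc%:R + (`|z'.2 - z.2|%N)%:R :> R)%R.
    rewrite -natrD ler_nat geq_max leq_addr /=.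
    have := leqD_dist z'.2 z.2 0; rewrite !subr0 => h.
    by apply: leq_trans h _; rewrite addnC leq_add2r.
  have := p_ge0 z z'; nra.
rewrite esumD; last 2 first.
- by move=> z' _; rewrite mule_ge0 ?lee_fin.
- by move=> z' _; rewrite adde_ge0 ?mule_ge0 ?lee_fin ?mulr_ge0.
rewrite esumD; last 2 first.
- by move=> z' _; rewrite lee_fin mulr_ge0.
- by move=> z' _; rewrite mule_ge0 ?lee_fin.
apply: leeD; first exact: esum_pZl_le.
by apply: leeD; [exact: dY_mean_le | exact: lexx].
Qed.

Lemma Estop_le_cost n z acc : (`|z.2| <= acc)%N ->
  Estop z acc n <= (acc%:R)%:E + cost n z.
Proof.
elim: n z acc => [|n IH] z acc hz.
  by rewrite /Estop esum_size0 /= ?lee_fin ?mulr_ge0 // mul1r addr0.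
apply: le_trans (Estop_succ_le z acc n) _.
apply: le_trans (esum_maxn_le hz (@cost_ge0 n)); apply: le_esum => z' _.
by rewrite lee_wpmul2l ?lee_fin //; case: ifP => _; rewrite ?adde0 // IH // leq_maxr.
Qed.

Lemma cost_drift_step al K n z : (0 <= al)%R -> (0 <= K)%R -> (al * eps = c)%R ->
  (forall z, cost n z <= lyap al K z) -> (k0 <= z.1)%N ->
  cost n.+1 z <= lyap al K z.
Proof.
move=> al0 K0 hal IH hz /=.
apply: le_trans (leeD2l _ (le_trans (le_killQ IH z) (killQ_lyap_drift al0 K0 hz))) _.
by rewrite /lyap -EFinD lee_fin; lra.
Qed.

(* Along the [m] steps from [z] to level [k], [cost] grows by [c m] and the
   drift adds at most [al m B] to [lyap al K]; the mass [q] killed on the way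
   saves [K q], which pays for both. *)
Lemma cost_return_step al K n m q s z : (0 <= al)%R -> (0 <= K)%R ->
  (c * m%:R <= K)%R -> (m%:R * (c + al * B) <= K * q)%R ->
  size s = m -> (0 < m)%N -> (last z s).1 = k -> (q <= pathprob p z s)%R ->
  (forall n', (n' < n)%N -> forall z, cost n' z <= lyap al K z) ->
  cost n z <= lyap al K z.
Proof.
move=> al0 K0 hcm hmq hsz m0 hl hq IH.
have xK : (K <= al * z.1%:R + K)%R by rewrite lerDr mulr_ge0.
have [hnm|hmn] := ltnP n m.
  apply: le_trans (cost_le_linear n z) _; rewrite lee_fin (le_trans _ xK) //.
  by rewrite (le_trans _ hcm) // ler_wpM2l // ler_nat ltnW.
have sn : s != [::] by rewrite -size_eq0 hsz -lt0n.
have hpath := iter_killQ1_path_le hl sn; rewrite hsz in hpath.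
have hQ := le_iter_killQ m (IH (n - m)%N ltac:(lia)) z.
rewrite -(subnK hmn); apply: le_trans (cost_addn_le _ _ _) _.
apply: le_trans (leeD2l _ (le_trans hQ (iter_killQ_lyap_le m z al0 K0))) _.
move: hpath (iter_killQ1_ge0 m z); case: (iter m killQ _ z) => [r||] //.
rewrite !lee_fin => hr r0.
have : (K * r <= K * (1 - q))%R by rewrite ler_wpM2l //; lra.
lra.
Qed.

Lemma cost_le_lyap : exists al K,
  [/\ (0 <= al)%R, (0 <= K)%R & forall n z, cost n z <= lyap al K z].
Proof.
pose al := (c / eps)%R.
have al0 : (0 <= al)%R by rewrite divr_ge0 // ltW.
have hal : (al * eps = c)%R by rewrite divfK // gt_eqF.
pose ret x K := exists m q, [/\ (0 < m)%N, (0 < q)%R, (c * m%:R <= K)%R,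
  (m%:R * (c + al * B) <= K * q)%R & forall y, exists s,
    [/\ size s = m, (last (x, y) s).1 = k & (q <= pathprob p (x, y) s)%R]].
have [K K0 HK] : exists2 K, (0 <= K)%R & forall x, (x < k0)%N -> ret x K.
  apply: uniform_bound_ltn => [x K K' hKK' [m [q [m0 q0 hcm hmq hs]]]|x hx].
    exists m, q; split => //; first exact: le_trans hKK'.
    by apply: le_trans hmq _; rewrite ler_wpM2r // ltW.
  have [m [q [m0 q0 hs]]] := reach_level hx.
  have hm0 : (0 <= m%:R * (c + al * B))%R by rewrite mulr_ge0 // addr_ge0 // mulr_ge0.
  exists (c * m%:R + m%:R * (c + al * B) / q)%R, m, q; split => //.
    by rewrite lerDl divr_ge0 // ltW.
  by rewrite mulrDl divfK ?gt_eqF // lerDr mulr_ge0 // ?mulr_ge0 // ltW.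
exists al, K; split => //.
elim/ltn_ind => n IH [x y].
have [hx|hx] := leqP k0 x.
  case: n IH => [|n] IH.
    apply: le_trans (cost_le_linear 0 _) _.
    by rewrite /lyap lee_fin mulr0 addr_ge0 // mulr_ge0.
  exact: (cost_drift_step (z := (x, y)) al0 K0 hal (IH n (ltnSn n)) hx).
have [m [q [m0 _ hcm hmq hs]]] := HK x hx.
have [s [hsz hl hq]] := hs y.
exact: cost_return_step al0 K0 hcm hmq hsz m0 hl hq IH.
Qed.

Lemma Etrunc_ub : exists M : R, forall n, Etrunc p k n <= M%:E.
Proof.
have [al [K [_ _ HV]]] := cost_le_lyap.
exists (al * k%:R + K)%R => n.
apply: le_trans (Estop_le_cost n (z := (k, 0%:Z)) (acc := 0%N) isT) _.
by rewrite add0e; apply: HV.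
Qed.

End KilledChain.

Section ChainZ1.
Variable R : realType.

Lemma lerNnat_int (n : nat) (a : int) : - n%:Z <= a -> - n%:R <= a%:~R :> R.
Proof. by move=> h; rewrite -[n%:R]/(n%:Z%:~R) -intrN ler_int. Qed.

Variables (k0 : nat) (mu : int * int -> R) (mu2 : nat -> int * int -> R).

Let p := pZ1 k0 mu mu2.

Lemma pZ1_shift x y t z' : p (x, y + t) (z'.1, z'.2 + t) = p (x, y) z'.
Proof. by rewrite /p /pZ1 /Defs.diff /= (_ : z'.2 + t - (y + t) = z'.2 - y) //; ring. Qed.

Lemma pathprob_pZ1_shift z s t :
  pathprob p (z.1, z.2 + t) (map (fun w => (w.1, w.2 + t)) s) = pathprob p z s.
Proof. by elim: s z => [|w s IH] z //=; rewrite (IH w) (pZ1_shift z.1 z.2 t w). Qed.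

Lemma pZ1_reach_level k x : irreducible p ->
  exists (m : nat) (q : R), [/\ (0 < m)%N, 0 < q & forall y : int,
    exists s, [/\ size s = m, (last (x, y) s).1 = k & q <= pathprob p (x, y) s]].
Proof.
(* The detour through [(x.+1, 0)] keeps the path nonempty when [x = k]. *)
move=> irr.
have [s1 [l1 p1]] := irr (x, 0) (x.+1, 0).
have [s2 [l2 p2]] := irr (x.+1, 0) (k, 0).
have s1_gt0 : (0 < size s1)%N.
  by rewrite lt0n size_eq0; apply/eqP => e; move: l1; rewrite e => -[]; lia.
exists (size (s1 ++ s2)), (pathprob p (x, 0) (s1 ++ s2)); split.
- by rewrite size_cat addn_gt0 s1_gt0.
- by rewrite pathprob_cat l1 mulr_gt0.
move=> y; exists (map (fun w : nat * int => (w.1, w.2 + y)) (s1 ++ s2)); split.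
- by rewrite size_map.
- have := last_map (fun w : nat * int => (w.1, w.2 + y)) (s1 ++ s2) (x, 0).
  by rewrite /= add0r => ->; rewrite last_cat l1 l2.
- by have := pathprob_pZ1_shift (x, 0) (s1 ++ s2) y; rewrite /= add0r => ->.
Qed.

Hypothesis mu_prob : probZ2 mu.
Hypothesis mu2_prob : forall i, (i < k0)%N -> probZ2 (mu2 i).
Hypothesis mu_supp : forall a b : int, (a < - k0%:Z \/ b < - k0%:Z) -> mu (a, b) = 0.
Hypothesis mu2_supp : forall (i : nat) (a b : int), (i < k0)%N ->
  (b < - k0%:Z \/ a < - i%:Z) -> mu2 i (a, b) = 0.

Definition jump x := if (k0 <= x)%N then mu else mu2 x.

Lemma pZ1_jump z z' : p z z' = jump z.1 (Defs.diff z.1%:Z z'.1%:Z z.2 z'.2).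
Proof. by rewrite /p /pZ1 /jump; case: ifP. Qed.

Lemma jump_ge0 x d : 0 <= jump x d.
Proof.
rewrite /jump; case: ifP => hx; first exact: mu_prob.1.
by apply: (mu2_prob _).1; rewrite ltnNge hx.
Qed.

Lemma jump_mass x : (\esum_(d in [set: int * int]) (jump x d)%:E = 1)%E.
Proof.
rewrite /jump; case: ifP => hx; first exact: mu_prob.2.
by apply: (mu2_prob _).2; rewrite ltnNge hx.
Qed.

Lemma jump_eq0 x d : (d.1 < - x%:Z \/ d.1 < - k0%:Z \/ d.2 < - k0%:Z) -> jump x d = 0.
Proof.
case: d => a b /= h; rewrite /jump; case: ifP => hx.
  by apply: mu_supp; case: h => [h|[h|h]]; [left|left|right] => //; lia.
have hx' : (x < k0)%N by rewrite ltnNge hx.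
by apply: mu2_supp => //; case: h => [h|[h|h]]; [right|right|left] => //; lia.
Qed.

Lemma jump_supp x d : jump x d != 0 ->
  [/\ - x%:Z <= d.1, - k0%:Z <= d.1 & - k0%:Z <= d.2].
Proof.
move=> /eqP h; split; rewrite leNgt; apply/negP => h'; apply: h; apply: jump_eq0.
- by left.
- by right; left.
- by right; right.
Qed.

Lemma esum_pZ1 x y (g : int * int -> R) : (forall d, 0 <= g d) ->
  \esum_(z' in [set: nat * int]) (p (x, y) z' * g (Defs.diff x%:Z z'.1%:Z y z'.2))%:E =
  \esum_(d in [set: int * int]) (jump x d * g d)%:E.
Proof.
move=> g0; under eq_esum do rewrite pZ1_jump.
apply: (@esum_shift_nat_int R x y (fun d => (jump x d * g d)%:E)).
- by move=> d; rewrite lee_fin mulr_ge0 ?jump_ge0.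
- by move=> d h; rewrite jump_eq0 ?mul0r //; left.
Qed.

Variables (mu1 : nat -> int * int -> R) (mu12 : nat -> nat -> int * int -> R).
Variables (delta gamma C : R).
Hypothesis delta_gt0 : 0 < delta.
Hypothesis gamma_gt0 : 0 < gamma.
Hypothesis C_ge0 : 0 <= C.
Hypothesis exp_moment : forall i j : nat,
  (\esum_(z in [set: nat * nat])
     (pZ k0 mu mu1 mu2 mu12 (i, j) z *
      expR (delta * (z.1%:R - i%:R) + gamma * (z.2%:R - j%:R)))%:E <= C%:E)%E.

Let expw (d : int * int) := expR (delta * d.1%:~R + gamma * d.2%:~R).

(* (A2) is only assumed for Z; it passes to Z_1 through the row [j = k0],
   where Z moves with the increments of Z_1. *)
Lemma pZ_row_k0 x z : pZ k0 mu mu1 mu2 mu12 (x, k0) z =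
  jump x (Defs.diff x%:Z z.1%:Z k0%:Z z.2%:Z).
Proof. by rewrite /pZ /jump /= leqnn andbT; case: (k0 <= x)%N. Qed.

Lemma jump_exp_moment x :
  (\esum_(d in [set: int * int]) (jump x d * expw d)%:E <= C%:E)%E.
Proof.
rewrite -(@esum_shift_nat_nat R x k0 (fun d => (jump x d * expw d)%:E)); first last.
- by move=> d h; rewrite jump_eq0 ?mul0r //; tauto.
- by move=> d; rewrite lee_fin mulr_ge0 ?jump_ge0 ?expR_ge0.
rewrite (le_trans _ (exp_moment x k0)) // le_eqVlt; apply/orP; left; apply/eqP.
by apply: eq_esum => z _; rewrite pZ_row_k0 /expw /Defs.diff /= !intrB.
Qed.

Let Kc := expR (delta * k0%:R) / gamma.
Let Kp := expR (gamma * k0%:R) / delta.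

Lemma Kc_ge0 : 0 <= Kc. Proof. by rewrite divr_ge0 ?expR_ge0 // ltW. Qed.
Lemma Kp_ge0 : 0 <= Kp. Proof. by rewrite divr_ge0 ?expR_ge0 // ltW. Qed.

Lemma jump_absY_moment x :
  (\esum_(d in [set: int * int]) (jump x d * (`|d.2|%N)%:R)%:E
   <= (k0%:R + Kc * C)%:E)%E.
Proof.
rewrite -[k0%:R]mulr1; apply: (esum_le_combination (m := jump x)
  (h := fun d => jump x d * expw d)) => //.
- exact: Kc_ge0.
- exact: jump_ge0.
- by move=> d; rewrite mulr_ge0 ?jump_ge0 ?expR_ge0.
- move=> [a b]; have [->|/jump_supp[_ ha hb]] := eqVneq (jump x (a, b)) 0.
    by rewrite !mul0r mulr0 addr0.
  have j0 := jump_ge0 x (a, b).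
  suff : (`|b|%N)%:R <= k0%:R + Kc * expw (a, b) by nra.
  have E0 : 0 <= Kc * expw (a, b) by rewrite mulr_ge0 ?Kc_ge0 ?expR_ge0.
  rewrite natr_absz intr_norm; have [b0|b0] := lerP 0 (b%:~R : R).
    rewrite ger0_norm //.
    apply: le_trans
      (le_scaled_expR delta_gt0 gamma_gt0 (ler0n _ k0) (lerNnat_int ha) b0) _.
    by rewrite lerDr.
  by rewrite ltr0_norm //; have := lerNnat_int hb; lra.
- by rewrite jump_mass.
- exact: jump_exp_moment.
Qed.

Lemma jump_posX_moment x :
  (\esum_(d in [set: int * int]) (jump x d * Num.max d.1%:~R 0)%:E <= (Kp * C)%:E)%E.
Proof.
suff : (\esum_(d in [set: int * int]) (jump x d * Num.max d.1%:~R 0)%:E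
  <= (0 * 1 + Kp * C)%:E)%E by rewrite mul0r add0r.
apply: (esum_le_combination (m := jump x)
  (h := fun d => jump x d * expw d)) => //.
- exact: Kp_ge0.
- exact: jump_ge0.
- by move=> d; rewrite mulr_ge0 ?jump_ge0 ?expR_ge0.
- move=> [a b]; have [->|/jump_supp[_ _ hb]] := eqVneq (jump x (a, b)) 0.
    by rewrite !mul0r mulr0 addr0.
  have j0 := jump_ge0 x (a, b).
  suff : Num.max (a%:~R : R) 0 <= Kp * expw (a, b) by nra.
  have [a0|a0] := lerP 0 (a%:~R : R); last by rewrite mulr_ge0 ?Kp_ge0 ?expR_ge0.
  rewrite /expw addrC.
  exact: le_scaled_expR gamma_gt0 delta_gt0 (ler0n _ k0) (lerNnat_int hb) a0.
- by rewrite jump_mass.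
- exact: jump_exp_moment.
Qed.

Lemma pZ1_ge0 z z' : 0 <= p z z'.
Proof. by rewrite pZ1_jump jump_ge0. Qed.

Lemma pZ1_mass z : (\esum_(z' in [set: nat * int]) (p z z')%:E <= 1)%E.
Proof.
case: z => x y; have := esum_pZ1 x y (g := fun=> 1) (fun=> ler01).
under eq_esum do rewrite mulr1; under [X in _ = X]eq_esum do rewrite mulr1.
by rewrite jump_mass => ->.
Qed.

Lemma pZ1_dY_mean_le z :
  (\esum_(z' in [set: nat * int]) (p z z' * (`|z'.2 - z.2|%N)%:R)%:E
   <= (k0%:R + Kc * C)%:E)%E.
Proof.
case: z => x y; rewrite (esum_pZ1 x y (g := fun d => (`|d.2|%N)%:R)) //.
exact: jump_absY_moment.
Qed.

Lemma pZ1_X_mean_eq x y :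
  \esum_(z' in [set: nat * int]) (p (x, y) z' * z'.1%:R)%:E =
  \esum_(d in [set: int * int]) (jump x d * Num.max (x%:R + d.1%:~R) 0)%:E.
Proof.
rewrite -(esum_pZ1 x y (g := fun d => Num.max (x%:R + d.1%:~R) 0)); last first.
  by move=> d; rewrite le_max lexx orbT.
apply: eq_esum => z' _; rewrite /Defs.diff /= intrB.
by rewrite (_ : x%:R + (z'.1%:~R - x%:~R) = z'.1%:R :> R) ?max_l //; ring.
Qed.

Lemma pZ1_X_mean_le z :
  (\esum_(z' in [set: nat * int]) (p z z' * z'.1%:R)%:E <= (z.1%:R + Kp * C)%:E)%E.
Proof.
case: z => x y; rewrite pZ1_X_mean_eq -[x%:R]mulr1 -[Kp * C]mul1r.
apply: (esum_le_combination (m := jump x)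
  (h := fun d => jump x d * Num.max d.1%:~R 0)) => //.
- exact: jump_ge0.
- by move=> d; rewrite mulr_ge0 ?jump_ge0 // le_max lexx orbT.
- move=> d; rewrite !mulr1 mul1r; have j0 := jump_ge0 x d.
  suff : Num.max (x%:R + d.1%:~R) 0 <= x%:R + Num.max (d.1%:~R : R) 0 by nra.
  by rewrite ge_max lerD2l le_max lexx /= addr_ge0 // le_max lexx orbT.
- by rewrite jump_mass.
- exact: jump_posX_moment.
Qed.

Hypothesis m1_lt0 : (m1 mu < 0)%E.

Let Pos := \esum_(d in [set: int * int]) (Num.max (d.1%:~R : R) 0 * mu d)%:E.
Let Neg := \esum_(d in [set: int * int]) (Num.max (- (d.1%:~R : R)) 0 * mu d)%:E.
Let eps := fine Neg - fine Pos.

Lemma max_mu_ge0 r d : 0 <= Num.max r 0 * mu d.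
Proof. by rewrite mulr_ge0 ?mu_prob.1 // le_max lexx orbT. Qed.

Lemma mu_supp1 d : mu d != 0 -> - k0%:Z <= d.1.
Proof. by move=> h; have /jump_supp[] : jump k0 d != 0 by rewrite /jump leqnn. Qed.

Lemma Pos_fineK : (fine Pos)%:E = Pos.
Proof.
apply: (ge0_le_fineK (r := Kp * C)).
  by apply: esum_ge0 => d _; rewrite lee_fin max_mu_ge0.
have -> : Pos = \esum_(d in [set: int * int]) (jump k0 d * Num.max d.1%:~R 0)%:E.
  by apply: eq_esum => d _; rewrite /jump leqnn mulrC.
exact: jump_posX_moment.
Qed.

Lemma Neg_fineK : (fine Neg)%:E = Neg.
Proof.
apply: (ge0_le_fineK (r := k0%:R * 1 + 0 * 1)).
  by apply: esum_ge0 => d _; rewrite lee_fin max_mu_ge0.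
apply: (esum_le_combination (m := mu) (h := mu)) => //.
- exact: mu_prob.1.
- exact: mu_prob.1.
- move=> d; rewrite mul0r addr0; have m0 := mu_prob.1 d.
  have [->|/mu_supp1/lerNnat_int h] := eqVneq (mu d) 0; first by rewrite !mulr0.
  suff : Num.max (- (d.1%:~R : R)) 0 <= k0%:R by nra.
  by rewrite ge_max ler0n andbT; lra.
- by rewrite mu_prob.2.
- by rewrite mu_prob.2.
Qed.

Lemma eps_gt0 : 0 < eps.
Proof.
move: m1_lt0; rewrite /m1 -/Pos -/Neg -Pos_fineK -Neg_fineK -EFinB lte_fin /eps.
lra.
Qed.

Lemma esum_mu_shift_Neg_le x : (k0 <= x)%N ->
  (\esum_(d in [set: int * int]) (mu d * Num.max (x%:R + d.1%:~R) 0)%:E + Neg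
   <= (x%:R * 1 + 1 * fine Pos)%:E)%E.
Proof.
move=> hx; rewrite /Neg -esumD; last 2 first.
- by move=> d _; rewrite mulrC lee_fin max_mu_ge0.
- by move=> d _; rewrite lee_fin max_mu_ge0.
under eq_esum do rewrite -EFinD.
apply: (esum_le_combination (m := mu)
  (h := fun d => Num.max (d.1%:~R : R) 0 * mu d)) => //.
- exact: mu_prob.1.
- by move=> d; apply: max_mu_ge0.
- move=> d; have m0 := mu_prob.1 d.
  have [->|/mu_supp1/lerNnat_int h] := eqVneq (mu d) 0.
    by rewrite !mulr0 !mul0r !addr0.
  have hxk : (k0%:R <= x%:R :> R) by rewrite ler_nat.
  rewrite (@max_l _ _ (x%:R + d.1%:~R)); last by lra.
  have [a0|a0] := lerP 0 (d.1%:~R : R).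
    by rewrite max_r; [nra | lra].
  by rewrite max_l; [nra | lra].
- by rewrite mu_prob.2.
- by rewrite Pos_fineK.
Qed.

Lemma pZ1_X_drift z : (k0 <= z.1)%N ->
  (\esum_(z' in [set: nat * int]) (p z z' * z'.1%:R)%:E <= (z.1%:R - eps)%:E)%E.
Proof.
case: z => x y /= hx; rewrite pZ1_X_mean_eq /jump hx.
have SNeg := esum_mu_shift_Neg_le hx; set S := esum _ _ in SNeg *.
have S0 : (0 <= S)%E by apply: esum_ge0 => d _; rewrite mulrC lee_fin max_mu_ge0.
have Neg0 : (0 <= Neg)%E by apply: esum_ge0 => d _; rewrite lee_fin max_mu_ge0.
have SfineK : (fine S)%:E = S.
  by apply: ge0_le_fineK S0 (le_trans _ SNeg); rewrite leeDl.
by move: SNeg; rewrite -SfineK -Neg_fineK -EFinD !lee_fin /eps; lra.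
Qed.

Lemma Etrunc_pZ1_ub k : irreducible p ->
  exists M : R, forall n, (Etrunc p k n <= M%:E)%E.
Proof.
move=> irr.
apply: (Etrunc_ub (c := k0%:R + Kc * C) (B := Kp * C) (eps := eps) (k0 := k0)).
- exact: pZ1_ge0.
- exact: pZ1_mass.
- by rewrite addr_ge0 // mulr_ge0 // Kc_ge0.
- by rewrite mulr_ge0 // Kp_ge0.
- exact: eps_gt0.
- exact: pZ1_dY_mean_le.
- exact: pZ1_X_mean_le.
- exact: pZ1_X_drift.
- by move=> x _; apply: pZ1_reach_level.
Qed.

End ChainZ1.

Theorem lemmaA2 (R : realType) (k0 : nat) (mu : int * int -> R)
  (mu1 mu2 : nat -> int * int -> R) (mu12 : nat -> nat -> int * int -> R) :
  (0 < k0)%N ->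
  (* the measures are probability measures on Z^2 *)
  probZ2 mu ->
  (forall j, (j < k0)%N -> probZ2 (mu1 j)) ->
  (forall i, (i < k0)%N -> probZ2 (mu2 i)) ->
  (forall i j, (i < k0)%N -> (j < k0)%N -> probZ2 (mu12 i j)) ->
  (* (A1) *)
  (forall a b : int, (a < - k0%:Z \/ b < - k0%:Z) -> mu (a, b) = 0) ->
  (forall (j : nat) (a b : int), (j < k0)%N ->
     (a < - k0%:Z \/ b < - j%:Z) -> mu1 j (a, b) = 0) ->
  (forall (i : nat) (a b : int), (i < k0)%N ->
     (b < - k0%:Z \/ a < - i%:Z) -> mu2 i (a, b) = 0) ->
  (forall (i j : nat) (a b : int), (i < k0)%N -> (j < k0)%N ->
     (a < - i%:Z \/ b < - j%:Z) -> mu12 i j (a, b) = 0) ->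
  (* (A2) *)
  (exists delta gamma C : R, 0 < delta /\ 0 < gamma /\ 0 < C /\
     forall i j : nat,
       (\esum_(z in [set: nat * nat])
          (pZ k0 mu mu1 mu2 mu12 (i, j) z *
           expR (delta * (z.1%:R - i%:R) + gamma * (z.2%:R - j%:R)))%:E
        <= C%:E)%E) ->
  (* (A3) *)
  irreducible (pZ0 mu) ->
  irreducible (pZ1 k0 mu mu2) ->
  irreducible (pZ2 k0 mu mu1) ->
  irreducible (pZ k0 mu mu1 mu2 mu12) ->
  (* m_1 < 0 *)
  (m1 mu < 0)%E ->
  (* conclusion: E_{(k,0)}[ sup_{0 <= s <= T_1(k)} |Y_1(s)| ] < +oo,
     expressed via monotone convergence of the truncations at time n *)
  forall k : nat, exists M : R, forall n : nat,
    (Etrunc (pZ1 k0 mu mu2) k n <= M%:E)%E.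
Proof.
move=> _ mu_prob _ mu2_prob _ mu_supp _ mu2_supp _
  [delta [gamma [C [delta_gt0 [gamma_gt0 [C_gt0 exp_moment]]]]]] _ irr1 _ _ m1_lt0 k.
exact: (Etrunc_pZ1_ub mu_prob mu2_prob mu_supp mu2_supp delta_gt0 gamma_gt0
  (ltW C_gt0) exp_moment m1_lt0 k irr1).
Qed.
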